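(* Let $c_{\mathrm{rew}},c_{\mathrm{ver}}>0$ and $c_{\min}=\min\{c_{\mathrm{rew}},c_{\mathrm{ver}}\}$. For every integer $s\ge0$ such that $S_s=\{(a,b)\in\mathbb Z_{\ge0}^2:a\le b,\ 2^sc_{\min}\le c_{\mathrm{rew}}2^b+c_{\mathrm{ver}}2^{b-a}<2^{s+1}c_{\min}\}$ is nonempty, setting $b_s^\star=\max\{b:(a,b)\in S_s\}$, $j_s^\star=\max\{b-a:(a,b)\in S_s\}$, $m_s=\lceil2^{b_s^\star+1}\rceil$ and $k_s=\lceil6\cdot2^{j_s^\star}\rceil$, the quantity $\Lambda_s:=c_{\mathrm{rew}}m_s+c_{\mathrm{ver}}k_s$ satisfies $\Lambda_s\le20\cdot2^sc_{\min}$. *)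

From mathcomp Require Import all_boot all_order all_algebra.
Set Implicit Arguments. Unset Strict Implicit. Unset Printing Implicit Defensive.
Import Order.TTheory GRing.Theory Num.Theory.
Local Open Scope ring_scope.

Definition cmin (R : archiRealFieldType) (crew cver : R) : R := Num.min crew cver.

Definition inS (R : archiRealFieldType) (crew cver : R) (s a b : nat) : Prop :=
  (a <= b)%N /\
  2%:R ^+ s * cmin crew cver <= crew * 2%:R ^+ b + cver * 2%:R ^+ (b - a) /\
  crew * 2%:R ^+ b + cver * 2%:R ^+ (b - a) < 2%:R ^+ s.+1 * cmin crew cver.

Definition is_bstar (R : archiRealFieldType) (crew cver : R) (s bstar : nat) : Prop :=
  (exists a, inS crew cver s a bstar) /\
  (forall a b, inS crew cver s a b -> (b <= bstar)%N).

Definition is_jstar (R : archiRealFieldType) (crew cver : R) (s jstar : nat) : Prop :=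
  (exists a b, inS crew cver s a b /\ (b - a)%N = jstar) /\
  (forall a b, inS crew cver s a b -> (b - a <= jstar)%N).

Definition Lambda (R : archiRealFieldType) (crew cver : R) (bstar jstar : nat) : R :=
  crew * (Num.ceil (2%:R ^+ bstar.+1 : R))%:~R
  + cver * (Num.ceil (6%:R * 2%:R ^+ jstar : R))%:~R.

(** Both ceilings are taken of integers, so Lambda_s = 2 c_rew 2^bstar + 6 c_ver 2^jstar.
    Any pair of S_s bounds each of its two (nonnegative) summands by 2^(s+1) c_min;
    applied to a pair realising bstar and to one realising jstar, this gives
    Lambda_s < (4 + 12) 2^s c_min. *)

From mathcomp Require Import all_boot all_order all_algebra.
From mathcomp Require Import ring lra.
Import Order.TTheory GRing.Theory Num.Theory.
Local Open Scope ring_scope.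

Section LambdaBound.

Context {R : archiRealFieldType} {crew cver : R}.

Lemma Lambda_exprE (b j : nat) :
  Lambda crew cver b j = crew * 2%:R ^+ b.+1 + cver * (6%:R * 2%:R ^+ j).
Proof.
have ceil_natr (n : nat) : (Num.ceil (n%:R : R))%:~R = n%:R :> R.
  by rewrite ceilK // rpred_nat.
by rewrite /Lambda -!natrX -natrM !ceil_natr natrM.
Qed.

Lemma inS_rew_lt {s a b : nat} : 0 <= cver -> inS crew cver s a b ->
  crew * 2%:R ^+ b < 2%:R ^+ s.+1 * cmin crew cver.
Proof.
move=> cver_ge0 [_ [_ sum_lt]]; apply: le_lt_trans sum_lt.
by rewrite lerDl mulr_ge0 ?exprn_ge0.
Qed.

Lemma inS_ver_lt {s a b : nat} : 0 <= crew -> inS crew cver s a b ->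
  cver * 2%:R ^+ (b - a) < 2%:R ^+ s.+1 * cmin crew cver.
Proof.
move=> crew_ge0 [_ [_ sum_lt]]; apply: le_lt_trans sum_lt.
by rewrite lerDr mulr_ge0 ?exprn_ge0.
Qed.

End LambdaBound.

Theorem lemma8 (R : archiRealFieldType) (crew cver : R)
  (hrew : 0 < crew) (hver : 0 < cver) (s : nat)
  (hne : exists a b, inS crew cver s a b)
  (bstar jstar : nat)
  (hb : is_bstar crew cver s bstar) (hj : is_jstar crew cver s jstar) :
  Lambda crew cver bstar jstar <= 20%:R * 2%:R ^+ s * cmin crew cver.
Proof.
have [[a Sb] _] := hb; have [[a' [b' [Sj <-]]] _] := hj.
have rew_lt := inS_rew_lt (ltW hver) Sb.
have ver_lt := inS_ver_lt (ltW hrew) Sj.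
have cmin_gt0 : 0 < cmin crew cver by rewrite lt_min hrew hver.
have pow_cmin_gt0 : 0 < 2%:R ^+ s * cmin crew cver by rewrite mulr_gt0 ?exprn_gt0.
rewrite Lambda_exprE !exprS -!mulrA in rew_lt ver_lt *.
lra.
Qed.
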